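(* Let $R$ be a strongly $\pi$-$*$-regular ring and $e$ an idempotent of $R$. Then $eRe$, with the involution restricted from $R$, is strongly $\pi$-$*$-regular.
   Context: A $*$-ring is a ring with identity with an involution $*$. A projection is $p$ with $p^2=p=p^*$. A $*$-ring is strongly $\pi$-$*$-regular if for every $a$ there exist a projection $e'$, a unit $u$ and $m\ge1$ with $a^m=e'u$ and $a,e',u$ pairwise commuting. (In such a ring every idempotent is a projection, so $(eRe)^*=eRe$ and $eRe$ is a $*$-ring with identity $e$.) *)

From HB Require Import structures.
From mathcomp Require Import all_boot all_order all_algebra.
Set Implicit Arguments. Unset Strict Implicit. Unset Printing Implicit Defensive.
Import GRing.Theory.
Local Open Scope ring_scope.

Definition is_involution (R : pzRingType) (s : R -> R) : Prop :=
  [/\ forall x y : R, s (x + y) = s x + s y,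
      forall x y : R, s (x * y) = s y * s x
    & forall x : R, s (s x) = x].

Definition in_corner (R : pzRingType) (e x : R) : Prop := e * x * e = x.

(* A unit of eRe is an element u
   of eRe with some v in eRe such that u v = v u = e; a projection of eRe is
   p in eRe with p^2 = p = s p.  Powers a^m with m >= 1 are the same in eRe
   and in R. *)
Definition spistar_on (R : pzRingType) (s : R -> R) (e : R) : Prop :=
  forall a : R, in_corner e a ->
    exists (p u v : R) (m : nat),
      [/\ [/\ in_corner e p, p * p = p & s p = p],
          [/\ in_corner e u, in_corner e v, u * v = e & v * u = e],
          (0 < m)%N, a ^+ m = p * u
        & [/\ a * p = p * a, a * u = u * a & p * u = u * p]].

Definition spistar (R : pzRingType) (s : R -> R) : Prop := spistar_on s 1.

From HB Require Import structures.
From mathcomp Require Import all_boot all_order all_algebra.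
Set Implicit Arguments. Unset Strict Implicit. Unset Printing Implicit Defensive.
Import GRing.Theory.
Local Open Scope ring_scope.

(* Applied to the idempotent e itself, strong pi-*-regularity writes e = p u
   with p a projection and u a commuting unit; cancelling u in e^2 = e gives
   e = p, so s e = e and the involution maps eRe to itself.  For a in eRe with
   a^m = p u, the element a^m is group-invertible with inverse p u^-1, and p
   lies in eRe.  Setting q = e - p, the same p works in eRe with the unit
   a^m + q of eRe, whose inverse there is p u^-1 + q. *)

Lemma idempotent_unit_factor (R : pzRingType) (p u v : R) :
  p * p = p -> p * u = u * p -> u * v = 1 ->
  (p * u) * (p * u) = p * u -> p * u = p.
Proof.
move=> pp pu uv fK.
have puu : p * u * u = p * u by rewrite -{2}fK mulrA -(mulrA p u p) -pu mulrA pp.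
by rewrite -[p * u]mulr1 -uv mulrA puu -mulrA uv mulr1.
Qed.

Lemma mul_add_orthogonal (R : pzRingType) (x y q : R) :
  x * q = 0 -> q * y = 0 -> (x + q) * (y + q) = x * y + q * q.
Proof. by move=> xq qy; rewrite mulrDl !mulrDr xq qy addr0 add0r. Qed.

Lemma in_corner1 (R : pzRingType) (a : R) : in_corner 1 a.
Proof. by rewrite /in_corner mul1r mulr1. Qed.

Section Corner.

Variables (R : pzRingType) (e : R).
Hypothesis idem_e : e * e = e.

Lemma in_cornerP (a : R) : e * a = a -> a * e = a -> in_corner e a.
Proof. by move=> ea ae; rewrite /in_corner ea ae. Qed.

Lemma corner_mull (a : R) : in_corner e a -> e * a = a.
Proof. by move=> Ha; rewrite -{1}Ha !mulrA idem_e. Qed.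

Lemma corner_mulr (a : R) : in_corner e a -> a * e = a.
Proof. by move=> Ha; rewrite -{1}Ha -mulrA idem_e. Qed.

Lemma in_corner_unit : in_corner e e.
Proof. exact: in_cornerP. Qed.

Lemma in_cornerD (a b : R) :
  in_corner e a -> in_corner e b -> in_corner e (a + b).
Proof.
by move=> Ha Hb; apply: in_cornerP; rewrite ?(mulrDr, mulrDl) ?corner_mull ?corner_mulr.
Qed.

Lemma in_cornerB (a b : R) :
  in_corner e a -> in_corner e b -> in_corner e (a - b).
Proof.
by move=> Ha Hb; apply: in_cornerP; rewrite ?(mulrBr, mulrBl) ?corner_mull ?corner_mulr.
Qed.

Lemma in_cornerM (a b : R) :
  in_corner e a -> in_corner e b -> in_corner e (a * b).
Proof.
move=> Ha Hb; apply: in_cornerP; first by rewrite mulrA corner_mull.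
by rewrite -mulrA corner_mulr.
Qed.

Lemma in_cornerX (a : R) (m : nat) :
  in_corner e a -> (0 < m)%N -> in_corner e (a ^+ m).
Proof.
move=> Ha; case: m => // m _; elim: m => [|m IHm]; first by rewrite expr1.
by rewrite exprS; apply: in_cornerM.
Qed.

Lemma idem_expr (m : nat) : (0 < m)%N -> e ^+ m = e.
Proof.
case: m => // m _; elim: m => [|m IHm]; first by rewrite expr1.
by rewrite exprS IHm idem_e.
Qed.

Lemma corner_comm (a : R) : in_corner e a -> GRing.comm a e.
Proof. by move=> Ha; rewrite /GRing.comm corner_mull // corner_mulr. Qed.

Section GroupInverse.

Variables (x p u v : R).
Hypotheses (corner_x : in_corner e x) (idem_p : p * p = p)
  (x_def : x = p * u) (pu : p * u = u * p) (uv : u * v = 1) (vu : v * u = 1).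

Let q := e - p.

Lemma inv_comm_idem : v * p = p * v.
Proof. by rewrite -[v * p]mulr1 -uv !mulrA -(mulrA v) pu !mulrA vu mul1r. Qed.

Lemma group_mulr_inv : x * v = p.
Proof. by rewrite x_def -mulrA uv mulr1. Qed.

Lemma group_mull_inv : v * x = p.
Proof. by rewrite x_def mulrA inv_comm_idem -mulrA vu mulr1. Qed.

Lemma idem_mull_group : p * x = x.
Proof. by rewrite x_def mulrA idem_p. Qed.

Lemma idem_mulr_group : x * p = x.
Proof. by rewrite x_def -mulrA -pu mulrA idem_p. Qed.

Lemma corner_idem : in_corner e p.
Proof.
apply: in_cornerP; first by rewrite -group_mulr_inv mulrA corner_mull.
by rewrite -group_mull_inv -mulrA corner_mulr.
Qed.

Lemma corner_group_inv : in_corner e (p * v).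
Proof.
apply: in_cornerP; first by rewrite mulrA (corner_mull corner_idem).
by rewrite -inv_comm_idem -mulrA (corner_mulr corner_idem).
Qed.

Lemma idem_mul_compl : p * q = 0.
Proof. by rewrite mulrBr (corner_mulr corner_idem) idem_p subrr. Qed.

Lemma compl_mul_idem : q * p = 0.
Proof. by rewrite mulrBl (corner_mull corner_idem) idem_p subrr. Qed.

Lemma compl_idem : q * q = q.
Proof. by rewrite {2}/q mulrBr compl_mul_idem subr0 /q mulrBl idem_e (corner_mulr corner_idem). Qed.

Lemma group_mul_compl : x * q = 0.
Proof. by rewrite mulrBr corner_mulr // idem_mulr_group subrr. Qed.

Lemma compl_mul_group : q * x = 0.
Proof. by rewrite mulrBl corner_mull // idem_mull_group subrr. Qed.

Lemma group_inv_mul_compl : p * v * q = 0.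
Proof. by rewrite -inv_comm_idem -mulrA idem_mul_compl mulr0. Qed.

Lemma compl_mul_group_inv : q * (p * v) = 0.
Proof. by rewrite mulrA compl_mul_idem mul0r. Qed.

Lemma corner_unit_shift :
  [/\ in_corner e p, in_corner e (x + q), in_corner e (p * v + q),
      (x + q) * (p * v + q) = e & (p * v + q) * (x + q) = e].
Proof.
have corner_q : in_corner e q by apply: in_cornerB; [exact: in_corner_unit | exact: corner_idem].
have pq : p + q = e by rewrite addrC subrK.
split; [exact: corner_idem | exact: in_cornerD | exact: in_cornerD corner_group_inv corner_q | |].
- rewrite mul_add_orthogonal ?group_mul_compl ?compl_mul_group_inv //.
  by rewrite mulrA idem_mulr_group group_mulr_inv compl_idem pq.
- rewrite mul_add_orthogonal ?group_inv_mul_compl ?compl_mul_group //.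
  by rewrite -mulrA group_mull_inv idem_p compl_idem pq.
Qed.

Lemma idem_mul_unit_shift : p * (x + q) = x.
Proof. by rewrite mulrDr idem_mull_group idem_mul_compl addr0. Qed.

Lemma idem_comm_unit_shift : GRing.comm p (x + q).
Proof.
by rewrite /GRing.comm idem_mul_unit_shift mulrDl idem_mulr_group compl_mul_idem addr0.
Qed.

End GroupInverse.

End Corner.

Lemma spistar_idem_sym (R : pzRingType) (s : R -> R) (e : R) :
  spistar s -> e * e = e -> s e = e.
Proof.
move=> Hs ee.
have [p [u [v [m [[_ pp sp] [_ _ uv _] m0 em [_ _ pu]]]]]] :=
  Hs e (in_corner1 e).
have eme : e ^+ m = e by exact: idem_expr.
suff ep : e = p by rewrite ep.
rewrite -eme em; apply: idempotent_unit_factor uv _ => //.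
by rewrite -em eme.
Qed.

Theorem corollary3p10 (R : pzRingType) (s : R -> R) (e : R) :
  is_involution s -> spistar s -> e * e = e ->
  (forall x : R, in_corner e x -> in_corner e (s x)) /\ spistar_on s e.
Proof.
move=> [_ sM _] Hs ee; have se := spistar_idem_sym Hs ee.
split=> [x Hx | a Ha]; first by rewrite /in_corner -{2}Hx !sM se mulrA.
have [p [u [v [m [[_ pp sp] [_ _ uv vu] m0 am [ap _ pu]]]]]] := Hs a (in_corner1 a).
have corner_am := in_cornerX ee Ha m0.
have [cp cx cy xy yx] := corner_unit_shift ee corner_am pp am pu uv vu.
have p_shift := idem_mul_unit_shift ee corner_am pp am pu uv vu.
have p_comm := idem_comm_unit_shift ee corner_am pp am pu uv vu.
exists p, (a ^+ m + (e - p)), (p * v + (e - p)), m; split=> //.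
split=> //; apply: commrD (commrX _ (commr_refl a)) (commrB (corner_comm ee Ha) ap).
Qed.
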